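(* Let $k\ge1$, $N\ge 1$, $h=1/N$, and let $\tilde u:[0,T]\to\mathcal{V}_h^k$ be a continuously differentiable solution of the semi-discrete problem $$(\tilde u_t,\chi)+(P[\tilde u_{xt}],\chi_x)=(P[\tilde u+\tfrac12\tilde u^2],\chi_x)\quad\text{for all }\chi\in\mathcal{V}_h^k,\ t\in[0,T].$$ Then the mass $\mathcal{M}(t;\tilde u)=\int_0^1\tilde u\,dx$ and the energy $\mathcal{E}(t;\tilde u)=\frac12\int_0^1\big(\tilde u^2+\tfrac13\tilde u^3\big)\,dx$ satisfy $\frac{d}{dt}\mathcal{M}(t;\tilde u)=0$ and $\frac{d}{dt}\mathcal{E}(t;\tilde u)=0$.
   Context: $C_p$ is the space of continuous $1$-periodic real functions; $x_i=ih$; $\mathcal{V}_h^k=\{\phi\in C_p:\ \phi|_{[x_{i-1},x_i]}\text{ is a polynomial of degree}\le k,\ i=1,\dots,N\}$. $(\cdot,\cdot)$ is the $L^2(0,1)$ inner product and $P$ the $L^2(0,1)$-orthogonal projection onto $\mathcal{V}_h^k$. Subscripts $x,t$ denote (piecewise) spatial and time derivatives. *)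

From Stdlib Require Import Reals List.
From Coquelicot Require Import Coquelicot.
Open Scope R_scope.

(* Horner evaluation of a polynomial given by its coefficient list
   [a0; a1; ...; an]  ->  a0 + a1 x + ... + an x^n. *)
Definition peval (l : list R) (x : R) : R :=
  fold_right (fun a acc => a + x * acc) 0 l.

Definition node (N i : nat) : R := INR i / INR N.

Definition in_Vh (N k : nat) (v : R -> R) : Prop :=
  (forall x, continuous v x) /\
  (forall x, v (x + 1) = v x) /\
  (forall i : nat, (1 <= i <= N)%nat ->
     exists l : list R, (length l <= k + 1)%nat /\
       forall x, node N (i - 1) <= x <= node N i -> v x = peval l x).

Definition ip (f g : R -> R) : R := RInt (fun x => f x * g x) 0 1.

Definition is_L2proj (N k : nat) (f p : R -> R) : Prop :=
  in_Vh N k p /\ forall chi, in_Vh N k chi -> ip p chi = ip f chi.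

(* Derivative of f at t relative to the set D (one-sided at endpoints of an
   interval): the difference quotient tends to l as s -> t, s in D, s <> t. *)
Definition deriv_within (D : R -> Prop) (f : R -> R) (t l : R) : Prop :=
  filterlim (fun s => (f s - f t) / (s - t))
    (within (fun s => D s /\ s <> t) (locally t)) (locally l).

Definition cont_within (D : R -> Prop) (f : R -> R) (t : R) : Prop :=
  filterlim f (within D (locally t)) (locally (f t)).

Definition mass (v : R -> R) : R := RInt v 0 1.
Definition energy (v : R -> R) : R :=
  / 2 * RInt (fun x => v x ^ 2 + / 3 * v x ^ 3) 0 1.

From Stdlib Require Import Reals List Lra Lia ClassicalEpsilon FinFun.
From Coquelicot Require Import Coquelicot.
Open Scope R_scope.

(* Mass: testing the scheme with chi = 1 gives (u_t, 1) = 0.  Energy: dE/dt = (u_t, w) with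
   w = u + u^2/2, and (u_t, w) = (u_t, P w).  Testing the scheme with P w and with P[u_xt],
   and using that d/dx is skew-adjoint on the periodic space V_h^k, (phi_x, psi) = -(phi, psi_x),
   shows that (u_t, P w) = 0.
   Differentiating under the integral sign needs no regularity in t beyond pointwise
   differentiability, because V_h^k is finite-dimensional: on each cell the difference
   quotients of u are polynomials of degree <= k, and polynomials of bounded degree that
   converge at k+1 distinct points converge uniformly on the cell. *)

Lemma peval_cons a l x : peval (a :: l) x = a + x * peval l x.
Proof. reflexivity. Qed.

Fixpoint synth_div (c : R) (l : list R) : list R :=
  match l with
  | nil => nil
  | a :: l' => match l' with nil => nil | _ :: _ => peval l' c :: synth_div c l' end
  end.

Lemma peval_synth_div c l x : peval l x = peval l c + (x - c) * peval (synth_div c l) x.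
Proof.
  induction l as [|a l IH]; [cbn; ring|].
  destruct l as [|b l']; [cbn; ring|].
  change (synth_div c (a :: b :: l')) with (peval (b :: l') c :: synth_div c (b :: l')).
  rewrite (peval_cons a _ x), (peval_cons a _ c), (peval_cons (peval _ c)), IH. ring.
Qed.

Lemma length_synth_div c l : length (synth_div c l) = pred (length l).
Proof. induction l as [|a [|b l'] IH]; cbn in *; congruence. Qed.

Fixpoint poly_add (l1 l2 : list R) : list R :=
  match l1, l2 with
  | nil, _ => l2
  | _, nil => l1
  | a :: l1', b :: l2' => (a + b) :: poly_add l1' l2'
  end.

Lemma peval_add l1 l2 x : peval (poly_add l1 l2) x = peval l1 x + peval l2 x.
Proof.
  revert l2; induction l1 as [|a l1 IH]; intros [|b l2]; cbn [poly_add]; try (cbn; ring).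
  rewrite !peval_cons, IH. ring.
Qed.

Lemma length_add l1 l2 n :
  (length l1 <= n)%nat -> (length l2 <= n)%nat -> (length (poly_add l1 l2) <= n)%nat.
Proof.
  revert l2 n; induction l1 as [|a l1 IH]; intros [|b l2] [|n]; cbn; auto; try lia.
  intros. apply le_n_S, IH; lia.
Qed.

Definition poly_scale (c : R) (l : list R) : list R := map (Rmult c) l.

Lemma peval_scale c l x : peval (poly_scale c l) x = c * peval l x.
Proof.
  induction l as [|a l IH]; [cbn; ring|].
  change (poly_scale c (a :: l)) with (c * a :: poly_scale c l).
  rewrite !peval_cons, IH. ring.
Qed.

Lemma length_scale c l : length (poly_scale c l) = length l.
Proof. apply length_map. Qed.

Fixpoint peval_deriv (l : list R) (x : R) : R :=
  match l with nil => 0 | _ :: l' => peval l' x + x * peval_deriv l' x end.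

Lemma is_derive_peval l x : is_derive (peval l) x (peval_deriv l x).
Proof.
  apply is_derive_Reals.
  induction l as [|a l IH]; cbn [peval_deriv].
  - apply (derivable_pt_lim_const 0).
  - replace (peval l x + x * peval_deriv l x)
      with (0 + (1 * peval l x + x * peval_deriv l x)) by ring.
    apply (derivable_pt_lim_plus (fun _ => a) (fun y => y * peval l y));
      [apply derivable_pt_lim_const|].
    apply (derivable_pt_lim_mult id (peval l)); [apply derivable_pt_lim_id | exact IH].
Qed.

Lemma continuous_peval l x : continuous (peval l) x.
Proof. exact (ex_derive_continuous _ x (ex_intro _ _ (is_derive_peval l x))). Qed.

Lemma continuous_peval_deriv l x : continuous (peval_deriv l) x.
Proof.
  induction l as [|a l IH]; cbn; [apply continuous_const|].
  apply (continuous_plus (peval l) (fun y => y * peval_deriv l y)); [apply continuous_peval|].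
  apply (continuous_mult (fun y => y) (peval_deriv l)); [apply continuous_id | exact IH].
Qed.

Lemma Rabs_minus_le a b : Rabs (a - b) <= Rabs a + Rabs b.
Proof. unfold Rminus. rewrite <- (Rabs_Ropp b). apply Rabs_triang. Qed.

Lemma exists_nodup_in_interval a b n : a < b ->
  exists xs, length xs = n /\ NoDup xs /\ forall c, In c xs -> a <= c <= b.
Proof.
  intros Hab.
  set (h := (b - a) / INR (S n)).
  assert (Hh : 0 < h) by (apply Rdiv_lt_0_compat; [lra | apply lt_0_INR; lia]).
  exists (map (fun j => a + INR j * h) (seq 0 n)). split; [|split].
  - now rewrite length_map, length_seq.
  - apply Injective_map_NoDup; [|apply seq_NoDup].
    intros i j Eij. apply INR_eq, (Rmult_eq_reg_r h); lra.
  - intros c Hc. apply in_map_iff in Hc as [j [<- Hj]]. apply in_seq in Hj.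
    assert (Hjn : INR j <= INR (S n)) by (apply le_INR; lia).
    assert (INR (S n) * h = b - a) by (unfold h; field; apply not_0_INR; lia).
    pose proof (pos_INR j). nra.
Qed.

Lemma node_0 N : node N 0 = 0.
Proof. unfold node. cbn. lra. Qed.

Lemma node_N N : (1 <= N)%nat -> node N N = 1.
Proof. intros. unfold node. field. apply not_0_INR. lia. Qed.

Lemma node_lt N i j : (1 <= N)%nat -> (i < j)%nat -> node N i < node N j.
Proof.
  intros HN Hij. apply Rmult_lt_compat_r.
  - apply Rinv_0_lt_compat, lt_0_INR. lia.
  - now apply lt_INR.
Qed.

Lemma node_le N i j : (1 <= N)%nat -> (i <= j)%nat -> node N i <= node N j.
Proof.
  intros HN Hij. apply Rmult_le_compat_r.
  - apply Rlt_le, Rinv_0_lt_compat, lt_0_INR. lia.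
  - now apply le_INR.
Qed.

Lemma cells_cover N m x : (1 <= N)%nat -> (1 <= m)%nat -> 0 <= x <= node N m ->
  exists i, (1 <= i <= m)%nat /\ node N (i - 1) <= x <= node N i.
Proof.
  intros HN. induction m as [|m IH]; intros Hm Hx; [lia|].
  destruct (Rle_lt_dec x (node N m)) as [Hxm|Hxm].
  - destruct m as [|m].
    + exists 1%nat. split; [lia|]. rewrite Nat.sub_diag, node_0. rewrite node_0 in Hxm. lra.
    + destruct IH as [i [Hi Hxi]]; [lia | lra |]. exists i. split; [lia | exact Hxi].
  - exists (S m). split; [lia|]. rewrite Nat.sub_succ, Nat.sub_0_r. lra.
Qed.

Definition piecewise_poly (N k : nat) (v : R -> R) : Prop :=
  forall i, (1 <= i <= N)%nat -> exists l : list R, (length l <= k + 1)%nat /\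
    forall x, node N (i - 1) <= x <= node N i -> v x = peval l x.

Lemma piecewise_poly_ext N k v w : (forall x, v x = w x) ->
  piecewise_poly N k v -> piecewise_poly N k w.
Proof.
  intros Hvw Hv i Hi. destruct (Hv i Hi) as [l [Hl Hx]].
  exists l. split; [exact Hl|]. intros x Hxi. rewrite <- Hvw. auto.
Qed.

Lemma piecewise_poly_plus N k v w : piecewise_poly N k v -> piecewise_poly N k w ->
  piecewise_poly N k (fun x => v x + w x).
Proof.
  intros Hv Hw i Hi. destruct (Hv i Hi) as [l1 [Hl1 Hx1]], (Hw i Hi) as [l2 [Hl2 Hx2]].
  exists (poly_add l1 l2). split; [now apply length_add|].
  intros x Hx. rewrite peval_add, Hx1, Hx2 by exact Hx. reflexivity.
Qed.

Lemma piecewise_poly_scale N k c v : piecewise_poly N k v ->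
  piecewise_poly N k (fun x => c * v x).
Proof.
  intros Hv i Hi. destruct (Hv i Hi) as [l [Hl Hx]].
  exists (poly_scale c l). split; [now rewrite length_scale|].
  intros x Hxi. rewrite peval_scale, Hx by exact Hxi. reflexivity.
Qed.

Section SmallFamilies.
Context {T : Type} (F : (T -> Prop) -> Prop) {FF : Filter F}.

Lemma synth_div_small (L : T -> list R) c c' : c' <> c ->
  (forall eps, 0 < eps -> F (fun s => Rabs (peval (L s) c) < eps)) ->
  (forall eps, 0 < eps -> F (fun s => Rabs (peval (L s) c') < eps)) ->
  forall eps, 0 < eps -> F (fun s => Rabs (peval (synth_div c (L s)) c') < eps).
Proof.
  intros Hcc' Hc Hc' eps Heps.
  assert (Hd : 0 < Rabs (c' - c)) by (apply Rabs_pos_lt; lra).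
  assert (He : 0 < eps * Rabs (c' - c) / 2) by (apply Rdiv_lt_0_compat; [nra | lra]).
  generalize (filter_and _ _ (Hc' _ He) (Hc _ He)). apply filter_imp; intros s [H1 H2].
  apply (Rmult_lt_reg_r (Rabs (c' - c))); [exact Hd|].
  rewrite <- Rabs_mult, Rmult_comm.
  replace ((c' - c) * peval (synth_div c (L s)) c') with (peval (L s) c' - peval (L s) c)
    by (rewrite (peval_synth_div c (L s) c'); ring).
  pose proof (Rabs_minus_le (peval (L s) c') (peval (L s) c)). lra.
Qed.

Lemma peval_small_of_small_at_nodes (xs : list R) (B : R) (L : T -> list R) :
  NoDup xs -> F (fun s => (length (L s) <= length xs)%nat) ->
  (forall c, In c xs -> forall eps, 0 < eps -> F (fun s => Rabs (peval (L s) c) < eps)) ->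
  forall eps, 0 < eps -> F (fun s => forall x, Rabs x <= B -> Rabs (peval (L s) x) < eps).
Proof.
  revert L; induction xs as [|c xs IH]; intros L Hnd Hlen Hsmall eps Heps.
  - revert Hlen; apply filter_imp; intros s Hs x _.
    destruct (L s); [|cbn in Hs; lia]. cbn. rewrite Rabs_R0. exact Heps.
  - inversion Hnd as [|? ? Hc Hnd']; subst.
    set (K := Rabs B + Rabs c + 1).
    assert (HK : 0 < K) by (unfold K; pose proof (Rabs_pos B); pose proof (Rabs_pos c); lra).
    assert (Hquot : F (fun s => forall x, Rabs x <= B ->
                       Rabs (peval (synth_div c (L s)) x) < eps / (2 * K))).
    { apply IH; [exact Hnd' | | | apply Rdiv_lt_0_compat; lra].
      - revert Hlen; apply filter_imp; intros s Hs.
        rewrite length_synth_div. cbn in Hs. lia.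
      - intros c' Hc'. apply synth_div_small; [intros ->; contradiction | |].
        + apply Hsmall. now left.
        + apply Hsmall. now right. }
    assert (He2 : 0 < eps / 2) by lra.
    generalize (filter_and _ _ Hquot (Hsmall c (or_introl eq_refl) _ He2)).
    apply filter_imp; intros s [Hq Hs_c] x Hx.
    assert (Hxc : Rabs (x - c) <= K).
    { unfold K. pose proof (Rabs_minus_le x c). pose proof (Rle_abs B). lra. }
    assert (Hprod : Rabs (x - c) * Rabs (peval (synth_div c (L s)) x) <= K * (eps / (2 * K))).
    { apply Rmult_le_compat; try apply Rabs_pos; [exact Hxc | apply Rlt_le, Hq, Hx]. }
    replace (K * (eps / (2 * K))) with (eps / 2) in Hprod by (field; lra).
    rewrite (peval_synth_div c (L s) x).
    pose proof (Rabs_triang (peval (L s) c) ((x - c) * peval (synth_div c (L s)) x)) as Htri.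
    rewrite Rabs_mult in Htri. lra.
Qed.

Lemma poly_small_on_interval (E : T -> R -> R) a b n : a < b ->
  F (fun s => exists l, (length l <= n)%nat /\ forall x, a <= x <= b -> E s x = peval l x) ->
  (forall c, a <= c <= b -> forall eps, 0 < eps -> F (fun s => Rabs (E s c) < eps)) ->
  forall eps, 0 < eps -> F (fun s => forall x, a <= x <= b -> Rabs (E s x) < eps).
Proof.
  intros Hab Hpoly Hsmall eps Heps.
  set (P := fun s l => (length l <= n)%nat /\ forall x, a <= x <= b -> E s x = peval l x).
  set (L := fun s => epsilon (inhabits nil) (P s)).
  assert (HL : F (fun s => P s (L s))).
  { revert Hpoly; apply filter_imp; intros s. apply epsilon_spec. }
  destruct (exists_nodup_in_interval a b n Hab) as [xs [Hlen [Hnd Hxs]]].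
  assert (Hsup : F (fun s => forall x, Rabs x <= Rabs a + Rabs b -> Rabs (peval (L s) x) < eps)).
  { apply (peval_small_of_small_at_nodes xs _ L Hnd); [| | exact Heps].
    - revert HL; apply filter_imp; intros s [Hs _]. now rewrite Hlen.
    - intros c Hc e He. generalize (filter_and _ _ HL (Hsmall c (Hxs c Hc) e He)).
      apply filter_imp; intros s [[_ HE] Hs]. rewrite <- HE by auto. exact Hs. }
  generalize (filter_and _ _ HL Hsup); apply filter_imp.
  intros s [[_ HE] Hs] x Hx. rewrite HE by exact Hx. apply Hs.
  unfold Rabs; repeat destruct Rcase_abs; lra.
Qed.

Lemma filter_forall_fin (P : nat -> T -> Prop) m :
  (forall i, (1 <= i <= m)%nat -> F (P i)) -> F (fun s => forall i, (1 <= i <= m)%nat -> P i s).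
Proof.
  induction m as [|m IH]; intros H.
  - apply filter_forall. intros; lia.
  - generalize (filter_and (F := F) _ _ (IH (fun i Hi => H i ltac:(lia))) (H (S m) ltac:(lia))).
    apply filter_imp; intros s [Hm HSm] i Hi.
    destruct (Nat.eq_dec i (S m)) as [->|]; [exact HSm | apply Hm; lia].
Qed.

Lemma piecewise_poly_small N k (E : T -> R -> R) :
  (1 <= N)%nat -> F (fun s => piecewise_poly N k (E s)) ->
  (forall x, 0 <= x <= 1 -> forall eps, 0 < eps -> F (fun s => Rabs (E s x) < eps)) ->
  forall eps, 0 < eps -> F (fun s => forall x, 0 <= x <= 1 -> Rabs (E s x) < eps).
Proof.
  intros HN Hpoly Hsmall eps Heps.
  assert (Hcells : F (fun s => forall i, (1 <= i <= N)%nat ->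
            forall x, node N (i - 1) <= x <= node N i -> Rabs (E s x) < eps)).
  { apply (filter_forall_fin (fun i s =>
      forall x, node N (i - 1) <= x <= node N i -> Rabs (E s x) < eps)).
    intros i Hi.
    assert (Hsub : node N (i - 1) < node N i) by (apply node_lt; lia).
    assert (Hcell : 0 <= node N (i - 1) /\ node N i <= 1).
    { rewrite <- (node_0 N) at 1. rewrite <- (node_N N HN). split; apply node_le; lia. }
    apply (poly_small_on_interval _ _ _ (k + 1) Hsub); [| | exact Heps].
    - revert Hpoly; apply filter_imp; intros s Hs. exact (Hs i Hi).
    - intros c Hc. apply Hsmall. lra. }
  revert Hcells; apply filter_imp; intros s Hs x Hx.
  rewrite <- (node_N N HN) in Hx.
  destruct (cells_cover N N x HN HN Hx) as [i [Hi Hxi]]. exact (Hs i Hi x Hxi).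
Qed.

End SmallFamilies.

Definition bounded01 (g : R -> R) : Prop :=
  exists M, forall x, 0 <= x <= 1 -> Rabs (g x) <= M.

Lemma bounded01_const c : bounded01 (fun _ => c).
Proof. exists (Rabs c). intros; lra. Qed.

Lemma bounded01_continuous g : (forall x, continuous g x) -> bounded01 g.
Proof.
  intros Hg.
  destruct (continuity_ab_maj (fun x => Rabs (g x)) 0 1) as [xm [Hxm _]]; [lra| |].
  - intros x _. apply (continuity_pt_comp g Rabs); [|apply Rcontinuity_abs].
    apply continuity_pt_filterlim, Hg.
  - exists (Rabs (g xm)). exact Hxm.
Qed.

Lemma bounded01_plus g1 g2 : bounded01 g1 -> bounded01 g2 -> bounded01 (fun x => g1 x + g2 x).
Proof.
  intros [M1 H1] [M2 H2]. exists (M1 + M2). intros x Hx.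
  pose proof (Rabs_triang (g1 x) (g2 x)). specialize (H1 x Hx). specialize (H2 x Hx). lra.
Qed.

Lemma bounded01_mult g1 g2 : bounded01 g1 -> bounded01 g2 -> bounded01 (fun x => g1 x * g2 x).
Proof.
  intros [M1 H1] [M2 H2]. exists (M1 * M2). intros x Hx. rewrite Rabs_mult.
  apply Rmult_le_compat; auto using Rabs_pos.
Qed.

(* The limit is required to be bounded so that uniform limits of products are products of limits. *)
Definition unif_cvg01 {T} (F : (T -> Prop) -> Prop) (f : T -> R -> R) (g : R -> R) : Prop :=
  bounded01 g /\
  forall eps, 0 < eps -> F (fun s => forall x, 0 <= x <= 1 -> Rabs (f s x - g x) < eps).

Section UniformConvergence.
Context {T : Type} (F : (T -> Prop) -> Prop) {FF : Filter F}.

Lemma unif_cvg01_ext f1 f2 g1 g2 :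
  F (fun s => forall x, 0 <= x <= 1 -> f1 s x = f2 s x) ->
  (forall x, 0 <= x <= 1 -> g1 x = g2 x) ->
  unif_cvg01 F f1 g1 -> unif_cvg01 F f2 g2.
Proof.
  intros Hf Hg [[M HM] Hcvg]. split.
  - exists M. intros x Hx. rewrite <- Hg by exact Hx. auto.
  - intros eps Heps. generalize (filter_and _ _ Hf (Hcvg eps Heps)).
    apply filter_imp; intros s [Hfs Hs] x Hx. rewrite <- Hfs, <- Hg by exact Hx. auto.
Qed.

Lemma unif_cvg01_const g : bounded01 g -> unif_cvg01 F (fun _ => g) g.
Proof.
  intros Hg. split; [exact Hg|]. intros eps Heps. apply filter_forall. intros s x _.
  rewrite Rminus_diag, Rabs_R0. exact Heps.
Qed.

Lemma unif_cvg01_plus f1 f2 g1 g2 : unif_cvg01 F f1 g1 -> unif_cvg01 F f2 g2 ->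
  unif_cvg01 F (fun s x => f1 s x + f2 s x) (fun x => g1 x + g2 x).
Proof.
  intros [Hb1 H1] [Hb2 H2]. split; [now apply bounded01_plus|]. intros eps Heps.
  assert (He : 0 < eps / 2) by lra.
  generalize (filter_and _ _ (H1 _ He) (H2 _ He)).
  apply filter_imp; intros s [Hs1 Hs2] x Hx.
  specialize (Hs1 x Hx). specialize (Hs2 x Hx).
  replace (f1 s x + f2 s x - (g1 x + g2 x)) with ((f1 s x - g1 x) + (f2 s x - g2 x)) by ring.
  pose proof (Rabs_triang (f1 s x - g1 x) (f2 s x - g2 x)). lra.
Qed.

Lemma unif_cvg01_mult f1 f2 g1 g2 : unif_cvg01 F f1 g1 -> unif_cvg01 F f2 g2 ->
  unif_cvg01 F (fun s x => f1 s x * f2 s x) (fun x => g1 x * g2 x).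
Proof.
  intros [Hb1 H1] [Hb2 H2]. split; [now apply bounded01_mult|]. intros eps Heps.
  destruct Hb1 as [M1 HM1], Hb2 as [M2 HM2].
  set (K := Rabs M1 + Rabs M2 + 1).
  assert (HK : 0 < K) by (unfold K; pose proof (Rabs_pos M1); pose proof (Rabs_pos M2); lra).
  set (e := Rmin 1 (eps / (2 * K))).
  assert (He : 0 < e) by (apply Rmin_pos; [lra | apply Rdiv_lt_0_compat; lra]).
  assert (HeK : e * K <= eps / 2).
  { replace (eps / 2) with (eps / (2 * K) * K) by (field; lra).
    apply Rmult_le_compat_r; [lra | apply Rmin_r]. }
  assert (He1 : e <= 1) by apply Rmin_l.
  generalize (filter_and _ _ (H1 e He) (H2 e He)).
  apply filter_imp; intros s [Hs1 Hs2] x Hx.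
  specialize (Hs1 x Hx). specialize (Hs2 x Hx). specialize (HM1 x Hx). specialize (HM2 x Hx).
  replace (f1 s x * f2 s x - g1 x * g2 x)
    with ((f1 s x - g1 x) * f2 s x + g1 x * (f2 s x - g2 x)) by ring.
  assert (Hf2 : Rabs (f2 s x) <= Rabs M2 + 1).
  { replace (f2 s x) with ((f2 s x - g2 x) + g2 x) by ring.
    pose proof (Rabs_triang (f2 s x - g2 x) (g2 x)). pose proof (Rle_abs M2). lra. }
  pose proof (Rabs_triang ((f1 s x - g1 x) * f2 s x) (g1 x * (f2 s x - g2 x))).
  rewrite !Rabs_mult in *.
  assert (Rabs (f1 s x - g1 x) * Rabs (f2 s x) <= e * (Rabs M2 + 1))
    by (apply Rmult_le_compat; auto using Rabs_pos; lra).
  assert (Rabs (g1 x) * Rabs (f2 s x - g2 x) <= Rabs M1 * e)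
    by (pose proof (Rle_abs M1); apply Rmult_le_compat; auto using Rabs_pos; lra).
  unfold K in HeK. lra.
Qed.

Lemma filterlim_RInt_unif_cvg01 f g : unif_cvg01 F f g ->
  F (fun s => ex_RInt (f s) 0 1) -> ex_RInt g 0 1 ->
  filterlim (fun s => RInt (f s) 0 1) F (locally (RInt g 0 1)).
Proof.
  intros [_ Hcvg] Hf Hg. apply filterlim_locally. intros [eps Heps]. cbn.
  assert (He : 0 < eps / 2) by lra.
  generalize (filter_and _ _ Hf (Hcvg _ He)).
  apply filter_imp; intros s [Hfs Hs].
  pose proof (RInt_minus (V := R_CompleteNormedModule) _ _ _ _ Hfs Hg) as E.
  change (RInt (fun x => f s x + - g x) 0 1 = RInt (f s) 0 1 + - RInt g 0 1) in E.
  change (Rabs (RInt (f s) 0 1 + - RInt g 0 1) < eps). rewrite <- E.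
  eapply Rle_lt_trans; [apply (abs_RInt_le_const _ 0 1 (eps / 2)) | lra].
  - lra.
  - apply (ex_RInt_minus (V := R_NormedModule)); assumption.
  - intros x Hx. apply Rlt_le, Hs, Hx.
Qed.

End UniformConvergence.

Lemma ex_RInt_of_continuous (f : R -> R) a b : (forall x, continuous f x) -> ex_RInt f a b.
Proof. intros Hf. apply (ex_RInt_continuous (V := R_CompleteNormedModule)). auto. Qed.

Lemma is_RInt_of_RInt_eq (f : R -> R) a b l :
  (forall x, continuous f x) -> RInt f a b = l -> is_RInt f a b l.
Proof.
  intros Hf <-. apply (RInt_correct (V := R_CompleteNormedModule)), ex_RInt_of_continuous, Hf.
Qed.

Lemma RInt_diff_quotient (f g : R -> R) c a b : ex_RInt f a b -> ex_RInt g a b ->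
  ex_RInt (fun x => (f x - g x) / c) a b /\
  RInt (fun x => (f x - g x) / c) a b = (RInt f a b - RInt g a b) / c.
Proof.
  intros Hf Hg.
  assert (E : forall x, scal (/ c) (minus (f x) (g x)) = (f x - g x) / c)
    by (intros; exact (Rmult_comm _ _)).
  assert (Hfg := ex_RInt_minus (V := R_NormedModule) _ _ _ _ Hf Hg).
  split.
  - exact (ex_RInt_ext _ _ _ _ (fun x _ => E x) (ex_RInt_scal _ _ _ _ Hfg)).
  - rewrite <- (RInt_ext _ _ _ _ (fun x _ => E x)), (RInt_scal (V := R_CompleteNormedModule)),
      (RInt_minus (V := R_CompleteNormedModule)) by assumption.
    exact (Rmult_comm _ _).
Qed.

Definition energy_density (y : R) : R := / 2 * (y ^ 2 + / 3 * y ^ 3).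

Section DifferenceQuotients.
Variables (D : R -> Prop) (t : R).

Let Ft := within (fun s => D s /\ s <> t) (locally t).


Let Ft_punctured : Ft (fun s => D s /\ s <> t).
Proof. unfold Ft, within. now apply filter_forall. Qed.

Lemma deriv_within_ext f g l : (forall s, D s -> f s = g s) -> D t ->
  deriv_within D f t l -> deriv_within D g t l.
Proof.
  intros Hfg Ht. apply filterlim_ext_loc.
  revert Ft_punctured; apply filter_imp; intros s [Hs _]. now rewrite !Hfg.
Qed.

Lemma unif_cvg01_shift : unif_cvg01 Ft (fun s _ => s - t) (fun _ => 0).
Proof.
  split; [apply bounded01_const|]. intros eps Heps.
  exists (mkposreal eps Heps). intros s Hs _ x _. rewrite Rminus_0_r. exact Hs.
Qed.

Lemma deriv_within_RInt (v : R -> R -> R) (w : R -> R) (l : R) : D t ->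
  (forall s, D s -> ex_RInt (v s) 0 1) -> is_RInt w 0 1 l ->
  unif_cvg01 Ft (fun s x => (v s x - v t x) / (s - t)) w ->
  deriv_within D (fun s => RInt (v s) 0 1) t l.
Proof.
  intros Ht Hv Hw Hcvg.
  assert (Hquot : Ft (fun s =>
     ex_RInt (fun x => (v s x - v t x) / (s - t)) 0 1 /\
     RInt (fun x => (v s x - v t x) / (s - t)) 0 1 = (RInt (v s) 0 1 - RInt (v t) 0 1) / (s - t))).
  { revert Ft_punctured; apply filter_imp; intros s [Hs _].
    apply RInt_diff_quotient; auto. }
  unfold deriv_within. rewrite <- (is_RInt_unique _ _ _ _ Hw).
  apply (filterlim_ext_loc (fun s => RInt (fun x => (v s x - v t x) / (s - t)) 0 1)).
  - revert Hquot; apply filter_imp; intros s [_ E]. exact E.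
  - apply (filterlim_RInt_unif_cvg01 Ft); [exact Hcvg | | now exists l].
    revert Hquot; apply filter_imp; intros s [H _]. exact H.
Qed.

Lemma unif_cvg01_of_diff_quotient (v : R -> R -> R) (w : R -> R) : bounded01 (v t) ->
  unif_cvg01 Ft (fun s x => (v s x - v t x) / (s - t)) w -> unif_cvg01 Ft v (v t).
Proof.
  intros Hb Hcvg.
  apply (unif_cvg01_ext Ft (fun s x => v t x + (s - t) * ((v s x - v t x) / (s - t)))
                          _ (fun x => v t x + 0 * w x)).
  - revert Ft_punctured; apply filter_imp; intros s [_ Hst] x _. field. lra.
  - intros x _. ring.
  - apply (unif_cvg01_plus Ft); [now apply (unif_cvg01_const Ft)|].
    apply (unif_cvg01_mult Ft); [apply unif_cvg01_shift | exact Hcvg].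
Qed.

Lemma unif_cvg01_energy_density_quotient (v : R -> R -> R) (w : R -> R) : bounded01 (v t) ->
  unif_cvg01 Ft (fun s x => (v s x - v t x) / (s - t)) w ->
  unif_cvg01 Ft (fun s x => (energy_density (v s x) - energy_density (v t x)) / (s - t))
                (fun x => w x * (v t x + / 2 * v t x ^ 2)).
Proof.
  intros Hb Hcvg.
  assert (Hv := unif_cvg01_of_diff_quotient v w Hb Hcvg).
  apply (unif_cvg01_ext Ft
    (fun s x => (v s x - v t x) / (s - t) * (/ 2 * ((v s x + v t x)
       + / 3 * (v s x * v s x + v s x * v t x + v t x * v t x))))
    _ (fun x => w x * (/ 2 * ((v t x + v t x)
       + / 3 * (v t x * v t x + v t x * v t x + v t x * v t x))))).
  - revert Ft_punctured; apply filter_imp; intros s [_ Hst] x _.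
    unfold energy_density. field. lra.
  - intros x _. field.
  - repeat first [ exact Hcvg | exact Hv | apply (unif_cvg01_mult Ft) | apply (unif_cvg01_plus Ft)
                 | apply (unif_cvg01_const Ft); first [exact Hb | apply bounded01_const] ].
Qed.

End DifferenceQuotients.

Lemma in_Vh_piecewise_poly N k v : in_Vh N k v -> piecewise_poly N k v.
Proof. intros [_ [_ H]]. exact H. Qed.

Lemma in_Vh_const N k c : in_Vh N k (fun _ => c).
Proof.
  split; [intros x; apply continuous_const|]. split; [reflexivity|].
  intros i _. exists (c :: nil). split; [cbn; lia|]. intros x _. cbn. ring.
Qed.

Lemma unif_cvg01_diff_quotient_Vh N k D (u : R -> R -> R) (w : R -> R) t :
  (1 <= N)%nat -> D t -> (forall s, D s -> in_Vh N k (u s)) -> in_Vh N k w ->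
  (forall x, deriv_within D (fun s => u s x) t (w x)) ->
  unif_cvg01 (within (fun s => D s /\ s <> t) (locally t))
    (fun s x => (u s x - u t x) / (s - t)) w.
Proof.
  intros HN Ht Hu Hw Hder.
  set (Ft := within (fun s => D s /\ s <> t) (locally t)).
  split; [apply bounded01_continuous, Hw|]. intros eps Heps.
  apply (piecewise_poly_small Ft N k (fun s x => (u s x - u t x) / (s - t) - w x) HN).
  - unfold Ft, within. apply filter_forall. intros s [Hs Hst].
    apply (piecewise_poly_ext _ _ (fun x => / (s - t) * (u s x + -1 * u t x) + -1 * w x)).
    { intros x. field. lra. }
    apply piecewise_poly_plus; [apply piecewise_poly_scale, piecewise_poly_plus|];
      [| apply piecewise_poly_scale | apply piecewise_poly_scale];
      apply in_Vh_piecewise_poly; auto.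
  - intros x _ e He. exact (proj1 (filterlim_locally _ _) (Hder x) (mkposreal e He)).
  - exact Heps.
Qed.

Lemma Derive_on_cell (phi : R -> R) l a b x :
  (forall y, a <= y <= b -> phi y = peval l y) -> a < x < b -> Derive phi x = peval_deriv l x.
Proof.
  intros Hphi Hx. rewrite (Derive_ext_loc phi (peval l)).
  - apply is_derive_unique, is_derive_peval.
  - apply (filter_imp (fun y => a < y /\ y < b)); [intros y Hy; apply Hphi; lra|].
    apply (open_and _ _ (open_gt a) (open_lt b)). exact Hx.
Qed.

Lemma is_RInt_Derive_mult_cell (phi psi : R -> R) p r a b : a < b ->
  (forall y, a <= y <= b -> phi y = peval p y) -> (forall y, a <= y <= b -> psi y = peval r y) ->
  is_RInt (fun x => Derive phi x * psi x + phi x * Derive psi x) a b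
    (phi b * psi b - phi a * psi a).
Proof.
  intros Hab Hp Hr.
  apply (is_RInt_ext (fun x => peval_deriv p x * peval r x + peval p x * peval_deriv r x)).
  - intros x Hx. rewrite Rmin_left, Rmax_right in Hx by lra.
    rewrite (Derive_on_cell phi p a b), (Derive_on_cell psi r a b), Hp, Hr by (auto; lra).
    reflexivity.
  - rewrite Hp, Hr, (Hp a), (Hr a) by lra.
    apply (is_RInt_derive (fun x => peval p x * peval r x)).
    + intros x _. apply (is_derive_mult (peval p) (peval r));
        [apply is_derive_peval | apply is_derive_peval | intros; apply Rmult_comm].
    + intros x _. apply (continuous_plus (fun x => peval_deriv p x * peval r x)
                                         (fun x => peval p x * peval_deriv r x));
        apply (continuous_mult (K := R_AbsRing));
        auto using continuous_peval, continuous_peval_deriv.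
Qed.

Lemma ex_RInt_Derive_mult_cell (phi psi : R -> R) p r a b : a < b ->
  (forall y, a <= y <= b -> phi y = peval p y) -> (forall y, a <= y <= b -> psi y = peval r y) ->
  ex_RInt (fun x => Derive phi x * psi x) a b.
Proof.
  intros Hab Hp Hr.
  apply (ex_RInt_ext (fun x => peval_deriv p x * peval r x)).
  - intros x Hx. rewrite Rmin_left, Rmax_right in Hx by lra.
    rewrite (Derive_on_cell phi p a b), Hr by (auto; lra). reflexivity.
  - apply ex_RInt_of_continuous. intros x.
    apply (continuous_mult (K := R_AbsRing)); auto using continuous_peval, continuous_peval_deriv.
Qed.

Lemma ex_RInt_cells N (f : R -> R) : (1 <= N)%nat ->
  (forall i, (1 <= i <= N)%nat -> ex_RInt f (node N (i - 1)) (node N i)) -> ex_RInt f 0 1.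
Proof.
  intros HN Hf.
  assert (Hm : forall m, (m <= N)%nat -> ex_RInt f 0 (node N m)).
  { induction m as [|m IH]; intros Hm.
    - rewrite node_0. apply ex_RInt_point.
    - apply (ex_RInt_Chasles _ _ (node N m)); [apply IH; lia|].
      specialize (Hf (S m) ltac:(lia)). now rewrite Nat.sub_succ, Nat.sub_0_r in Hf. }
  rewrite <- (node_N N HN). now apply Hm.
Qed.

Lemma is_RInt_cells_telescope N (f G : R -> R) : (1 <= N)%nat ->
  (forall i, (1 <= i <= N)%nat ->
     is_RInt f (node N (i - 1)) (node N i) (G (node N i) - G (node N (i - 1)))) ->
  is_RInt f 0 1 (G 1 - G 0).
Proof.
  intros HN Hf.
  assert (Hm : forall m, (m <= N)%nat -> is_RInt f 0 (node N m) (G (node N m) - G 0)).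
  { induction m as [|m IH]; intros Hm.
    - rewrite node_0, Rminus_diag. apply (is_RInt_point (V := R_NormedModule)).
    - replace (G (node N (S m)) - G 0)
        with (plus (G (node N m) - G 0) (G (node N (S m)) - G (node N m))) by (cbn; ring).
      apply (is_RInt_Chasles (V := R_NormedModule) _ _ (node N m)); [apply IH; lia|].
      specialize (Hf (S m) ltac:(lia)). now rewrite Nat.sub_succ, Nat.sub_0_r in Hf. }
  rewrite <- (node_N N HN). now apply Hm.
Qed.

Lemma ip_comm f g : ip f g = ip g f.
Proof. apply RInt_ext. intros x _. apply Rmult_comm. Qed.

Lemma ip_Derive_skew N k phi psi : (1 <= N)%nat -> in_Vh N k phi -> in_Vh N k psi ->
  ip (Derive phi) psi = - ip phi (Derive psi).
Proof.
  intros HN [_ [Hper_phi Hphi]] [_ [Hper_psi Hpsi]].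
  assert (Hcell : forall i, (1 <= i <= N)%nat -> exists p r,
            node N (i - 1) < node N i /\
            (forall y, node N (i - 1) <= y <= node N i -> phi y = peval p y) /\
            (forall y, node N (i - 1) <= y <= node N i -> psi y = peval r y)).
  { intros i Hi. destruct (Hphi i Hi) as [p [_ Hp]], (Hpsi i Hi) as [r [_ Hr]].
    exists p, r. split; [apply node_lt; lia | auto]. }
  assert (Hex1 : ex_RInt (fun x => Derive phi x * psi x) 0 1).
  { apply (ex_RInt_cells N _ HN). intros i Hi.
    destruct (Hcell i Hi) as [p [r [Hab [Hp Hr]]]].
    exact (ex_RInt_Derive_mult_cell phi psi p r _ _ Hab Hp Hr). }
  assert (Hex2 : ex_RInt (fun x => phi x * Derive psi x) 0 1).
  { apply (ex_RInt_ext (fun x => Derive psi x * phi x)); [intros; apply Rmult_comm|].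
    apply (ex_RInt_cells N _ HN). intros i Hi.
    destruct (Hcell i Hi) as [p [r [Hab [Hp Hr]]]].
    exact (ex_RInt_Derive_mult_cell psi phi r p _ _ Hab Hr Hp). }
  assert (Hsum : is_RInt (fun x => Derive phi x * psi x + phi x * Derive psi x) 0 1
                   (phi 1 * psi 1 - phi 0 * psi 0)).
  { apply (is_RInt_cells_telescope N _ (fun x => phi x * psi x) HN). intros i Hi.
    destruct (Hcell i Hi) as [p [r [Hab [Hp Hr]]]].
    exact (is_RInt_Derive_mult_cell phi psi p r _ _ Hab Hp Hr). }
  assert (Hperiodic : phi 1 * psi 1 - phi 0 * psi 0 = 0).
  { specialize (Hper_phi 0). specialize (Hper_psi 0). rewrite Rplus_0_l in *.
    rewrite Hper_phi, Hper_psi. ring. }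
  rewrite Hperiodic in Hsum. apply (is_RInt_unique (V := R_CompleteNormedModule)) in Hsum.
  rewrite (RInt_plus (V := R_CompleteNormedModule)) in Hsum by assumption.
  change (RInt (fun x => Derive phi x * psi x) 0 1 + RInt (fun x => phi x * Derive psi x) 0 1 = 0)
    in Hsum.
  unfold ip. lra.
Qed.

Lemma ip_Derive_self N k phi : (1 <= N)%nat -> in_Vh N k phi -> ip phi (Derive phi) = 0.
Proof.
  intros HN Hphi. pose proof (ip_Derive_skew N k phi phi HN Hphi Hphi) as Hskew.
  rewrite ip_comm in Hskew. lra.
Qed.

Lemma ip_Derive_const f c : ip f (Derive (fun _ => c)) = 0.
Proof.
  unfold ip. rewrite (RInt_ext _ (fun _ => 0)).
  - rewrite RInt_const. apply Rmult_0_r.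
  - intros x _. rewrite Derive_const. apply Rmult_0_r.
Qed.

Section SemiDiscreteScheme.
Variables (N k : nat) (vt pxt pnl nl : R -> R).
Hypotheses (HN : (1 <= N)%nat) (Hvt : in_Vh N k vt)
  (Hpxt : is_L2proj N k (Derive vt) pxt) (Hpnl : is_L2proj N k nl pnl)
  (Hscheme : forall chi, in_Vh N k chi ->
     ip vt chi + ip pxt (Derive chi) = ip pnl (Derive chi)).

Lemma scheme_RInt_eq0 : RInt vt 0 1 = 0.
Proof.
  pose proof (Hscheme (fun _ => 1) (in_Vh_const N k 1)) as H.
  rewrite !ip_Derive_const in H. unfold ip in H.
  transitivity (RInt (fun x => vt x * 1) 0 1); [|lra].
  apply RInt_ext. intros x _. symmetry. apply Rmult_1_r.
Qed.

Lemma scheme_ip_nonlinearity_eq0 : ip vt nl = 0.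
Proof.
  destruct Hpxt as [Hpxt_Vh Hpxt_proj], Hpnl as [Hpnl_Vh Hpnl_proj].
  pose proof (Hscheme pnl Hpnl_Vh) as Hchi_pnl.
  pose proof (Hscheme pxt Hpxt_Vh) as Hchi_pxt.
  rewrite (ip_Derive_self N k pnl HN Hpnl_Vh) in Hchi_pnl.
  rewrite (ip_Derive_self N k pxt HN Hpxt_Vh) in Hchi_pxt.
  assert (Hvt_pxt : ip vt pxt = 0).
  { rewrite ip_comm, (Hpxt_proj vt Hvt), ip_comm. exact (ip_Derive_self N k vt HN Hvt). }
  assert (Hskew := ip_Derive_skew N k pnl pxt HN Hpnl_Vh Hpxt_Vh).
  rewrite (ip_comm (Derive pnl)) in Hskew.
  rewrite ip_comm, <- (Hpnl_proj vt Hvt), ip_comm. lra.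
Qed.

End SemiDiscreteScheme.

Lemma continuous_comp_derivable (g f : R -> R) x :
  (forall y, ex_derive g y) -> continuous f x -> continuous (fun z => g (f z)) x.
Proof.
  intros Hg Hf. apply continuous_comp; [exact Hf | exact (ex_derive_continuous g _ (Hg _))].
Qed.

Lemma energy_RInt v : (forall x, continuous v x) ->
  energy v = RInt (fun x => energy_density (v x)) 0 1.
Proof.
  intros Hv. unfold energy, energy_density. symmetry.
  apply (RInt_scal (V := R_CompleteNormedModule)), ex_RInt_of_continuous.
  intros x. apply (continuous_comp_derivable (fun y => y ^ 2 + / 3 * y ^ 3)); [|apply Hv].
  intros y. auto_derive. exact I.
Qed.

Theorem proposition3p1
  (k N : nat) (T : R)
  (u ut Pxt Pnl : R -> R -> R)
  (Hk : (1 <= k)%nat) (HN : (1 <= N)%nat)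
  (* u(t) in V_h^k, continuously differentiable in t on [0,T] with derivative ut *)
  (Hu : forall t, 0 <= t <= T -> in_Vh N k (u t))
  (Hut : forall t, 0 <= t <= T -> in_Vh N k (ut t))
  (Hder : forall t x, 0 <= t <= T ->
     deriv_within (fun s => 0 <= s <= T) (fun s => u s x) t (ut t x))
  (Hcont : forall t x, 0 <= t <= T ->
     cont_within (fun s => 0 <= s <= T) (fun s => ut s x) t)
  (* Pxt t = P[u_xt(t)],  Pnl t = P[u(t) + u(t)^2/2] *)
  (HPxt : forall t, 0 <= t <= T -> is_L2proj N k (Derive (ut t)) (Pxt t))
  (HPnl : forall t, 0 <= t <= T ->
     is_L2proj N k (fun x => u t x + / 2 * u t x ^ 2) (Pnl t))
  (* semi-discrete scheme *)
  (Hscheme : forall t, 0 <= t <= T -> forall chi, in_Vh N k chi ->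
     ip (ut t) chi + ip (Pxt t) (Derive chi) = ip (Pnl t) (Derive chi)) :
  forall t, 0 <= t <= T ->
    deriv_within (fun s => 0 <= s <= T) (fun s => mass (u s)) t 0 /\
    deriv_within (fun s => 0 <= s <= T) (fun s => energy (u s)) t 0.
Proof.
  intros t Ht.
  assert (Hcvg := unif_cvg01_diff_quotient_Vh N k _ u (ut t) t HN Ht Hu (Hut t Ht)
                    (fun x => Hder t x Ht)).
  assert (Hu_cont : forall s x, 0 <= s <= T -> continuous (u s) x) by (intros; apply Hu; auto).
  destruct (Hut t Ht) as [Hut_cont _].
  split.
  - apply (deriv_within_RInt _ t u (ut t) 0 Ht); [| |exact Hcvg].
    + intros s Hs. apply ex_RInt_of_continuous. auto.
    + apply is_RInt_of_RInt_eq; [exact Hut_cont|].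
      exact (scheme_RInt_eq0 N k _ _ _ (Hscheme t Ht)).
  - set (w := fun x => u t x + / 2 * u t x ^ 2).
    apply (deriv_within_ext _ t (fun s => RInt (fun x => energy_density (u s x)) 0 1));
      [intros s Hs; symmetry; apply energy_RInt; auto | exact Ht |].
    apply (deriv_within_RInt _ t _ (fun x => ut t x * w x) 0 Ht); cycle 2.
    + exact (unif_cvg01_energy_density_quotient _ t u (ut t)
               (bounded01_continuous _ (fun x => Hu_cont t x Ht)) Hcvg).
    + intros s Hs. apply ex_RInt_of_continuous. intros x.
      apply continuous_comp_derivable; [|auto].
      intros y. unfold energy_density. auto_derive. exact I.
    + apply is_RInt_of_RInt_eq;
        [|exact (scheme_ip_nonlinearity_eq0 N k _ _ _ w HN (Hut t Ht) (HPxt t Ht) (HPnl t Ht)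
                   (Hscheme t Ht))].
      intros x. apply (continuous_mult (K := R_AbsRing)); [apply Hut_cont|].
      apply (continuous_comp_derivable (fun y => y + / 2 * y ^ 2)); [|auto].
      intros y. auto_derive. exact I.
Qed.
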